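(* Let $x\in\{0,1\}^\infty$ satisfy $\sigma^n(x)=x$ for some $n\ge1$, and let $X=\{\sigma^j(x):0\le j<n\}$ be its orbit. Then the hereditary closure $\tilde X$ of $X$ is a transitive sofic shift and \[\tilde X=\{y\in\{0,1\}^\infty: y\le\sigma^j(x)\text{ for some }0\le j<n\}.\] If moreover $\sigma(x)\ne x$, then $\tilde X$ is not topologically mixing.
   Context: On $\{0,1\}^\infty=\{0,1\}^{\mathbb N_0}$, $y\le x$ means $y_i\le x_i$ for all $i$. The hereditary closure of a shift space $X$ is $\tilde X=\{y\in\{0,1\}^\infty:\exists x\in X,\ y\le x\}$. A sofic shift is the set of label sequences of infinite paths in a finite edge-labelled directed graph. Transitive: for all words $u,w$ in the language there is $v$ with $uvw$ in the language; topologically mixing: for all $u,w$ there is $N$ such that for every $m\ge N$ some $v$ with $|v|=m$ has $uvw$ in the language. *)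

From mathcomp Require Import all_boot.
Set Implicit Arguments. Unset Strict Implicit. Unset Printing Implicit Defensive.

(* Points of {0,1}^N_0, with 0 = false, 1 = true. *)
Definition pt := nat -> bool.

Definition shift (x : pt) : pt := fun i => x i.+1.

Definition le01 (y x : pt) : Prop := forall i, (y i <= x i)%N.

Definition hered (X : pt -> Prop) : pt -> Prop :=
  fun y => exists x, X x /\ le01 y x.

(* Sofic shift: set of label sequences of infinite paths in a finite
   edge-labelled directed graph with vertex set 'I_nv and edge set 'I_ne
   (multi-edges allowed). *)
Definition sofic (S : pt -> Prop) : Prop :=
  exists (nv ne : nat) (src tgt : 'I_ne -> 'I_nv) (lab : 'I_ne -> bool),
    forall y, S y <->
      exists p : nat -> 'I_ne,
        (forall i, tgt (p i) = src (p i.+1)) /\ (forall i, y i = lab (p i)).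

Definition occurs (w : seq bool) (y : pt) : Prop :=
  exists k, forall i, i < size w -> y (k + i) = nth false w i.

Definition in_lang (S : pt -> Prop) (w : seq bool) : Prop :=
  exists y, S y /\ occurs w y.

Definition shift_transitive (S : pt -> Prop) : Prop :=
  forall u w, in_lang S u -> in_lang S w ->
    exists v, in_lang S (u ++ v ++ w).

Definition top_mixing (S : pt -> Prop) : Prop :=
  forall u w, in_lang S u -> in_lang S w ->
    exists N, forall m, N <= m ->
      exists v, size v = m /\ in_lang S (u ++ v ++ w).

From mathcomp Require Import all_boot.
From mathcomp Require Import zify.
From Stdlib Require Import FunctionalExtensionality.

Set Implicit Arguments.
Unset Strict Implicit.
Unset Printing Implicit Defensive.

(* A point lies in the
   hereditary closure of X iff it is dominated by some shift of x, and a word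
   lies in its language iff it is dominated by some window of x ("fits").
   The whole argument rests on one rigidity fact for periodic points: if a
   shift of x dominates x on a full period, it equals x.
   - Sofic: the closure is presented by the cycle on the n residues mod n,
     where vertex k carries an edge labelled 0 and an edge labelled x k to k+1.
   - Transitive: after a word fitting at a, pad with zeros until the position
     is congruent mod n to where the second word fits.
   - Not mixing: mixing would join one period u of x to itself by a gap of
     length 1 mod n; rigidity forces both windows of x dominating the two
     copies of u to coincide with x, whence x is fixed by the shift. *)

Lemma iter_shift (x : pt) (j i : nat) : iter j shift x i = x (j + i).
Proof. by elim: j i => [|j IH] i //=; rewrite /shift IH addnS. Qed.

Definition orbit (x : pt) (n : nat) : pt -> Prop :=
  fun y => exists j, j < n /\ y = iter j shift x.

Lemma hered_orbitE (x : pt) (n : nat) (y : pt) :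
  hered (orbit x n) y <-> exists j, j < n /\ le01 y (iter j shift x).
Proof.
split; first by move=> [_ [[j [jn ->]] le_y]]; exists j.
by move=> [j [jn le_y]]; exists (iter j shift x); split => //; exists j.
Qed.

Definition fits (x : pt) (u : seq bool) (a : nat) : Prop :=
  forall i, i < size u -> nth false u i <= x (a + i).

Lemma lang_hered_orbit (x : pt) (n : nat) (u : seq bool) :
  0 < n -> in_lang (hered (orbit x n)) u <-> exists a, fits x u a.
Proof.
move=> n_gt0; split.
  move=> [y [[_ [[j [_ ->]] le_y]] [k occ_u]]].
  exists (j + k) => i lt_i; rewrite -occ_u //.
  by have := le_y (k + i); rewrite iter_shift addnA.
move=> [a fit_u].
pose y i := if (a <= i) && (i < a + size u) then nth false u (i - a) else false.
exists y; split.
  exists x; split; first by exists 0.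
  move=> i; rewrite /y; case: ifP => // /andP [le_ai lt_i].
  by rewrite -{2}(subnKC le_ai); apply: fit_u; lia.
exists a => i lt_i; rewrite /y.
have -> : (a <= a + i) && (a + i < a + size u) by apply/andP; split; lia.
by rewrite addKn.
Qed.

Lemma fits_catl (x : pt) (u w : seq bool) (a : nat) :
  fits x (u ++ w) a -> fits x u a.
Proof.
move=> fit i lt_i; have := fit i; rewrite nth_cat lt_i size_cat; apply; lia.
Qed.

Lemma fits_catr (x : pt) (u w : seq bool) (a : nat) :
  fits x (u ++ w) a -> fits x w (a + size u).
Proof.
move=> fit i lt_i; have := fit (size u + i).
rewrite nth_cat [size u + i < size u]ltnNge leq_addr addKn addnA size_cat.
by apply; lia.
Qed.

Lemma fits_cat (x : pt) (u w : seq bool) (a : nat) :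
  fits x u a -> fits x w (a + size u) -> fits x (u ++ w) a.
Proof.
move=> fit_u fit_w i; rewrite size_cat => lt_i.
rewrite nth_cat; case: ltnP => [lt_iu|le_ui]; first exact: fit_u.
by have := fit_w (i - size u); rewrite -addnA subnKC //; apply; lia.
Qed.

Lemma fits_zeros (x : pt) (m a : nat) : fits x (nseq m false) a.
Proof. by move=> i _; rewrite nth_nseq if_same. Qed.

Section PeriodicPoint.

Variables (x : pt) (n : nat).
Hypothesis n_gt0 : 0 < n.
Hypothesis x_periodic : iter n shift x = x.

Lemma periodicD (k i : nat) : x (k * n + i) = x i.
Proof.
elim: k => [//|k IH]; rewrite mulSn -addnA.
by rewrite -[x (n + _)]iter_shift x_periodic.
Qed.

Lemma periodic_mod (i : nat) : x i = x (i %% n).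
Proof. by rewrite {1}(divn_eq i n) periodicD. Qed.

Lemma fits_periodic (u : seq bool) (k a : nat) :
  fits x u a -> fits x u (k * n + a).
Proof. by move=> fit i /fit; rewrite -addnA periodicD. Qed.

(* Rigidity: a shift of x that dominates x on one period coincides with x.
   Domination extends to all positions by periodicity and iterates to
   x i <= x (c + i) <= x (n * c + i) = x i. *)
Lemma dominating_shift_eq (c : nat) :
  (forall i, i < n -> x i <= x (c + i)) -> forall i, x (c + i) = x i.
Proof.
move=> dom_period.
have dom i : x i <= x (c + i).
  rewrite periodic_mod [x (c + i)]periodic_mod -modnDmr.
  rewrite -[x ((c + _) %% n)]periodic_mod.
  exact/dom_period/ltn_pmod.
have dom_iter k i : x i <= x (k * c + i).
  elim: k => [//|k IH]; apply: leq_trans IH (leq_trans (dom _) _).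
  by rewrite addnA -mulSn.
move=> i; have le_shift : x (c + i) <= x i.
  case: n n_gt0 periodicD => [//|n'] _ perD.
  by have := dom_iter n' (c + i); rewrite addnA -mulSnr mulnC perD.
by move: (dom i) le_shift; case: (x i); case: (x (c + i)).
Qed.

Lemma full_period_fits (a : nat) : fits x (mkseq x n) a -> forall i, x (a + i) = x i.
Proof.
move=> fit; apply: dominating_shift_eq => i lt_i.
by have := fit i; rewrite size_mkseq nth_mkseq //; apply.
Qed.

(* The cycle graph presenting the closure: vertices are residues mod n; edge
   e < n goes from e to e+1 (mod n) with label x e, edge n + k from k to
   k+1 (mod n) with label 0. *)
Definition cyc_src (e : 'I_(n + n)) : 'I_n := Ordinal (ltn_pmod e n_gt0).
Definition cyc_tgt (e : 'I_(n + n)) : 'I_n := Ordinal (ltn_pmod e.+1 n_gt0).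
Definition cyc_lab (e : 'I_(n + n)) : bool := (e < n) && x e.

Lemma lt_mod_double (k : nat) : k %% n < n + n.
Proof. exact: leq_trans (ltn_pmod k n_gt0) (leq_addr _ _). Qed.

Lemma lt_add_mod_double (k : nat) : n + k %% n < n + n.
Proof. by rewrite ltn_add2l ltn_pmod. Qed.

Definition cyc_edge (k : nat) (b : bool) : 'I_(n + n) :=
  if b then Ordinal (lt_mod_double k) else Ordinal (lt_add_mod_double k).

Lemma cyc_edge_mod (k : nat) (b : bool) : cyc_edge k b %% n = k %% n.
Proof. by case: b => /=; rewrite ?modnDl modn_mod. Qed.

Lemma cyc_lab_edge (k : nat) (b : bool) : b <= x k -> cyc_lab (cyc_edge k b) = b.
Proof.
rewrite /cyc_lab; case: b => /= [|_]; last by rewrite ltnNge leq_addr.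
by rewrite ltn_pmod //= -periodic_mod; case: (x k).
Qed.

Lemma cycle_graph_labels (y : pt) :
  (exists p : nat -> 'I_(n + n),
     (forall i, cyc_tgt (p i) = cyc_src (p i.+1)) /\
     (forall i, y i = cyc_lab (p i)))
  <-> exists j, j < n /\ le01 y (iter j shift x).
Proof.
split.
  move=> [p [p_path p_lab]]; pose j := p 0 %% n.
  have p_mod i : p i %% n = (j + i) %% n.
    elim: i => [|i IH]; first by rewrite addn0 modn_mod.
    have /(congr1 val) /= <- := p_path i.
    by rewrite -addn1 -modnDml IH modnDml addn1 addnS.
  exists j; split; first exact: ltn_pmod.
  move=> i; rewrite p_lab iter_shift /cyc_lab; case: ltnP => //= lt_p.
  by rewrite [x (j + i)]periodic_mod -p_mod modn_small.
move=> [j [lt_j le_y]].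
exists (fun i => cyc_edge (j + i) (y i)); split.
  move=> i; apply/val_inj => /=.
  by rewrite -addn1 -modnDml cyc_edge_mod cyc_edge_mod modnDml addn1 addnS.
by move=> i; rewrite cyc_lab_edge //; have := le_y i; rewrite iter_shift.
Qed.

Lemma hered_orbit_sofic : sofic (hered (orbit x n)).
Proof.
exists n, (n + n), cyc_src, cyc_tgt, cyc_lab => y.
by rewrite hered_orbitE cycle_graph_labels.
Qed.

(* Join u (fitting at a) to w (fitting at b) by zeros, reaching a position
   congruent to b mod n. *)
Lemma hered_orbit_transitive : shift_transitive (hered (orbit x n)).
Proof.
move=> u w /(lang_hered_orbit x _ n_gt0) [a fit_u].
move=> /(lang_hered_orbit x _ n_gt0) [b fit_w].
set P := a + size u; have le_P : P <= P * n by rewrite leq_pmulr.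
exists (nseq (P * n + b - P) false); apply/(lang_hered_orbit x _ n_gt0); exists a.
apply: fits_cat => //; apply: fits_cat; first exact: fits_zeros.
rewrite size_nseq -/P subnKC; first exact: fits_periodic.
exact: leq_trans le_P (leq_addr _ _).
Qed.

(* Mixing would allow a period of x, a gap of length N*n + 1, and the period
   again; by rigidity x would then be invariant under a shift by 1 mod n. *)
Lemma hered_orbit_not_mixing : shift x <> x -> ~ top_mixing (hered (orbit x n)).
Proof.
move=> shift_neq mixing.
have lang_period : in_lang (hered (orbit x n)) (mkseq x n).
  apply/(lang_hered_orbit x _ n_gt0); exists 0 => i.
  by rewrite size_mkseq => lt_i; rewrite nth_mkseq.
have [N gaps] := mixing _ _ lang_period lang_period.
have le_gap : N <= (N * n).+1 by rewrite ltnW // ltnS leq_pmulr.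
have [v [size_v /(lang_hered_orbit x _ n_gt0) [a fit]]] := gaps _ le_gap.
have eq_first := full_period_fits (fits_catl fit).
have eq_second := full_period_fits (fits_catr (fits_catr fit)).
apply: shift_neq; apply: functional_extensionality => t.
rewrite /shift -(eq_second t) size_mkseq size_v.
have -> : a + n + (N * n).+1 + t = a + (N.+1 * n + t.+1) by rewrite mulSn; lia.
by rewrite eq_first periodicD.
Qed.

End PeriodicPoint.

Theorem mainTheorem16 (x : pt) (n : nat) :
  0 < n -> iter n shift x = x ->
  let X := fun y : pt => exists j, j < n /\ y = iter j shift x in
  [/\ sofic (hered X),
      shift_transitive (hered X),
      (forall y, hered X y <-> exists j, j < n /\ le01 y (iter j shift x)) &
      (shift x <> x -> ~ top_mixing (hered X))].
Proof.
move=> n_gt0 x_periodic X.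
split.
- exact: hered_orbit_sofic.
- exact: hered_orbit_transitive.
- exact: hered_orbitE.
- exact: hered_orbit_not_mixing.
Qed.
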